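(* Let $r_0>0$ and let $(X_t)_{t\in(0,r_0]}$ be a family of Banach spaces with bounded linear injective operators $j_{s,r}\in L(X_r;X_s)$ with dense image for $0<s\le r\le r_0$, such that $j_{s,s}=\mathrm{Id}$ and $j_{s,c}j_{c,r}=j_{s,r}$ for $0<s\le c\le r\le r_0$. Let $\mathcal{B}$ be a Banach space and $U\subset\mathcal{B}$ a non-empty open convex set. Let $(Q_{s,r}(u))$ be an equivariant $(\gamma,0)$-regular family, write $Q_s(u)=Q_{s,s}(u)\in L(X_s)$, and suppose $\mathbf{1}-Q_s(u)$ is invertible for all $0<s\le r_0$, $u\in U$, with inverse $R_s(u)=(\mathbf{1}-Q_s(u))^{-1}$ uniformly bounded for $\epsilon<s\le r_0$ (and $u\in U$) for every $\epsilon>0$. Then the family $R_{s,r}(u)=j_{s,r}R_r(u)$, $0<s<r\le r_0$, is again equivariant and $(\gamma,0)$-regular.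
   Context: For $\gamma>0$ with $\gamma\le r_0$, let $I_0=\{(s,r)\in(0,r_0]^2:s\le r\}$. A family of operators $M_{s,r}(u)\in L(X_r,X_s)$, $(s,r)\in I_0$, $u\in U$, is equivariant and $(\gamma,0)$-regular if (i) $j_{s,s'}M_{s',r'}(u)=M_{s,r}(u)j_{r,r'}$ for all $(s,r),(s',r')\in I_0$ with $s<s'$, $r<r'$, and (ii) $u\mapsto M_{s,r}(u)\in L(X_r,X_s)$ is $C^t$ for all $(s,r)\in I_0$ and $0\le t<\gamma\wedge(r-s)$. For $t=k+\alpha$ ($k\in\mathbb{N}_0$, $\alpha\in(0,1]$), $C^t$ means $k$ times Fréchet differentiable with bounded derivatives and $\alpha$-Hölder $k$-th derivative; $C^0$ means continuous. *)

From HB Require Import structures.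
From mathcomp Require Import all_boot all_order all_algebra.
From mathcomp Require Import all_classical all_reals all_analysis.
Set Implicit Arguments. Unset Strict Implicit. Unset Printing Implicit Defensive.
Import Order.TTheory GRing.Theory Num.Theory.
Import numFieldNormedType.Exports.
Local Open Scope classical_set_scope.
Local Open Scope ring_scope.

Section Defs.
Variable R : realType.

Definition bdd_lin (V W : normedModType R) (f : V -> W) : Prop :=
  (forall (a : R) (x y : V), f (a *: x + y) = a *: f x + f y) /\
  exists C : R, forall x, `|f x| <= C * `|x|.

Definition upd (B : Type) (h : nat -> B) (j : nat) (b : B) : nat -> B :=
  fun m => if m == j then b else h m.

Definition hcons (B : Type) (v : B) (h : nat -> B) : nat -> B :=
  fun m => if m is m'.+1 then h m' else v.

Definition hprod (B : normedModType R) (i : nat) (h : nat -> B) : R :=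
  \prod_(m < i) `|h m|.

Section Reg.
Variables (B V W : normedModType R).

(* D i u is the i-th Frechet
   derivative at u, an element of L^i(B; L(V,W)), written as the
   (i+1)-linear map (h_0,...,h_{i-1}, x) |-> D^i F(u)[h_0,...,h_{i-1}] x.
   Operator norms of such maps are expressed through the usual
   bounds |D i u h x| <= C * prod_m |h m| * |x|. *)
Definition multilin_at (D : nat -> B -> (nat -> B) -> V -> W) (i : nat) (u : B) :=
  [/\ (forall h h' x, (forall m, (m < i)%N -> h m = h' m) -> D i u h x = D i u h' x),
      (forall h, bdd_lin (D i u h)),
      (forall h j x (a : R) (b c : B), (j < i)%N ->
          D i u (upd h j (a *: b + c)) x = a *: D i u (upd h j b) x + D i u (upd h j c) x) &
      (exists C : R, forall h x, `|D i u h x| <= C * hprod i h * `|x|)].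

Definition Ck_alpha (U : set B) (F : B -> V -> W) (k : nat) (alpha : R) : Prop :=
  exists D : nat -> B -> (nat -> B) -> V -> W,
  [/\ (forall u h x, U u -> D 0%N u h x = F u x),
      (forall i u, (i <= k)%N -> U u -> multilin_at D i u),
      (forall i u, (i < k)%N -> U u -> forall eps : R, 0 < eps ->
         exists2 del : R, 0 < del & forall v, `|v| < del -> U (u + v) ->
           forall h x, `|D i (u + v) h x - D i u h x - D i.+1 u (hcons v h) x|
                       <= eps * `|v| * hprod i h * `|x|),
      (forall i, (i <= k)%N -> exists C : R, forall u, U u ->
         forall h x, `|D i u h x| <= C * hprod i h * `|x|) &
      (exists C : R, forall u v, U u -> U v ->
         forall h x, `|D k u h x - D k v h x|
                     <= C * (`|u - v| `^ alpha) * hprod k h * `|x|)].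

Definition C0_op (U : set B) (F : B -> V -> W) : Prop :=
  forall u, U u -> forall eps : R, 0 < eps ->
    exists2 del : R, 0 < del & forall v, U v -> `|v - u| < del ->
      forall x, `|F v x - F u x| <= eps * `|x|.

Definition Ct (t : R) (U : set B) (F : B -> V -> W) : Prop :=
  if t == 0 then C0_op U F
  else exists (k : nat) (alpha : R),
         [/\ 0 < alpha, alpha <= 1, t = k%:R + alpha & Ck_alpha U F k alpha].
End Reg.

Unset Implicit Arguments.
Section Family.
Context {B : normedModType R} {X : R -> normedModType R}.
Variable (j : forall s r : R, X r -> X s).

Definition I0 (r0 s r : R) : Prop := 0 < s /\ s <= r /\ r <= r0.

Definition equivariant (r0 : R) (U : set B)
    (M : forall s r : R, B -> X r -> X s) : Prop :=
  forall s r s' r', I0 r0 s r -> I0 r0 s' r' -> s < s' -> r < r' ->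
    forall u, U u -> forall x : X r',
      j s s' (M s' r' u x) = M s r u (j r r' x).

Definition regular (r0 gamma : R) (U : set B)
    (M : forall s r : R, B -> X r -> X s) : Prop :=
  forall s r, I0 r0 s r -> forall t : R, 0 <= t -> t < Num.min gamma (r - s) ->
    Ct t U (M s r).

Definition equiv_regular (r0 gamma : R) (U : set B)
    (M : forall s r : R, B -> X r -> X s) : Prop :=
  [/\ forall s r, I0 r0 s r -> forall u, U u -> bdd_lin (M s r u),
      equivariant r0 U M & regular r0 gamma U M].
End Family.
End Defs.

(** The resolvent identity, transported along the scale by equivariance, reads
      R_{s,r}(u) - R_{s,r}(v) = R_{s,c}(u) (Q_{c,c'}(u) - Q_{c,c'}(v)) R_{c',r}(v)
    for s < c < c' < r: a loss of regularity of Q is paid for by a loss of scale.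
    It makes R Hoelder continuous, and differentiating it gives
      DR_{s,r}(u)[v] = R_{s,c}(u) DQ_{c,c'}(u)[v] R_{c',r}(u).
    So each derivative of R is a sum of composition products of R and of
    derivatives of Q, each factor using a slice of the scale gap r - s.  Operator
    families with a prescribed loss of scale that are k times differentiable form
    a class closed under sums and (by the Leibniz rule) composition products, and
    induction on k shows that R is C^{k+alpha} whenever k + alpha < min(gamma, r - s).
    The derivatives of Q are only given existentially for each pair (s, r);
    uniqueness of Frechet derivatives makes any choice of them compatible with
    the injections j. *)

From HB Require Import structures.
From mathcomp Require Import all_boot all_order all_algebra.
From mathcomp Require Import all_classical all_reals all_analysis.
From mathcomp Require Import ring lra.
Import Order.TTheory GRing.Theory Num.Theory.
Import numFieldNormedType.Exports.
Set Implicit Arguments. Unset Strict Implicit. Unset Printing Implicit Defensive.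
Local Open Scope classical_set_scope.
Local Open Scope ring_scope.

Lemma addrBB_split (V : zmodType) (a b c d e f : V) :
  a + b - (c + d) - (e + f) = (a - c - e) + (b - d - f).
Proof.
have sub2 (x y z t : V) : x + y - (z + t) = (x - z) + (y - t) by rewrite opprD addrACA.
by rewrite (sub2 a) sub2.
Qed.

Lemma subrD_insert (V : zmodType) (x y z d d0 w : V) :
  x - z - (d0 + w) = (x - y - d) + (d - d0) + (y - z - w).
Proof.
have -> : x - y - d + (d - d0) = x - y - d0 by rewrite addrA subrK.
by rewrite addrACA (addrA (x - y)) subrK -opprD.
Qed.

Section RealFacts.
Variable R : realType.

Lemma bdd_lin_bound (V W : normedModType R) (f : V -> W) :
  bdd_lin f -> exists2 C : R, 0 <= C & forall x, `|f x| <= C * `|x|.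
Proof.
case=> _ [C hC]; exists (Num.max C 0); first by rewrite le_max lexx orbT.
by move=> x; apply: le_trans (hC x) _; rewrite ler_wpM2r // le_max lexx.
Qed.

Lemma le_of_eq (x y : R) : x = y -> x <= y.
Proof. by move->. Qed.

Lemma small_factor (C e : R) : 0 <= C -> 0 < e -> exists2 e' : R, 0 < e' & C * e' <= e.
Proof.
move=> C0 e0; exists (e / (C + 1)); first by rewrite divr_gt0 // ltr_wpDl.
by rewrite mulrA ler_pdivrMr ?ltr_wpDl //; nra.
Qed.

Lemma homogeneous_eq (V W : normedModType R) (L1 L2 : V -> W) :
  (forall (a : R) v, L1 (a *: v) = a *: L1 v) ->
  (forall (a : R) v, L2 (a *: v) = a *: L2 v) ->
  (forall e, 0 < e -> exists2 d, 0 < d &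
     forall v, `|v| < d -> `|L1 v - L2 v| <= e * `|v|) ->
  forall v, L1 v = L2 v.
Proof.
move=> h1 h2 small v; apply/eqP; rewrite -subr_eq0 -normr_le0.
apply/ler_addgt0Pr => e e0; rewrite add0r.
have [e' e'0 ve'] := small_factor (normr_ge0 v) e0.
have [d d0 hd] := small e' e'0.
have [->|vn0] := eqVneq v 0.
  by rewrite -(scale0r (0 : V)) h1 h2 !scale0r subrr normr0 ltW.
have nv : 0 < `|v| by rewrite normr_gt0.
pose a := d / (2 * `|v|).
have a0 : 0 < a by rewrite divr_gt0 // mulr_gt0.
have : `|a *: v| < d.
  by rewrite normrZ gtr0_norm // /a invfM -!mulrA mulVf ?gt_eqF // mulr1; lra.
move=> /hd; rewrite h1 h2 -scalerBr !(normrZ a) (gtr0_norm a0) mulrCA ler_pM2l //.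
by move/le_trans; apply; rewrite mulrC.
Qed.

Lemma holder_small (a H eta : R) : 0 < a -> 0 <= H -> 0 < eta ->
  exists2 d : R, 0 < d & forall z, 0 <= z -> z < d -> H * z `^ a <= eta.
Proof.
move=> a0 H0 eta0; have [q q0 Hq] := small_factor H0 eta0.
exists (q `^ a^-1); first exact: powR_gt0.
move=> z z0 zd; apply: le_trans Hq; rewrite ler_wpM2l //.
have -> : q = (q `^ a^-1) `^ a by rewrite -powRrM mulVf ?gt_eqF // powRr1 // ltW.
by apply: ge0_ler_powR; rewrite ?nnegrE ?powR_ge0 // ltW.
Qed.

Lemma exists_exponent (g1 g2 : R) : 0 < g1 -> 0 < g2 ->
  exists a : R, [/\ 0 < a, a <= 1, a < g1 & a < g2].
Proof.
move=> g10 g20; set a := Num.min 1 (Num.min (g1 / 2) (g2 / 2)).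
have ag1 : a <= g1 / 2 by rewrite /a !ge_min lexx orbT.
have ag2 : a <= g2 / 2 by rewrite /a !ge_min lexx !orbT.
exists a; split; [by rewrite /a !lt_min ltr01 !divr_gt0|by rewrite /a ge_min lexx|lra|lra].
Qed.

Lemma nat_frac_decomp (t : R) : 0 < t ->
  exists (k : nat) (a : R), [/\ 0 < a, a <= 1 & t = k%:R + a].
Proof.
move=> t0; have /andP[tl tu] := truncn_itv (ltW t0).
set n := Num.truncn t in tl tu.
have [e|ne] := eqVneq (n%:R) t.
  case: n e tl tu => [|n'] e _ _; first by move: t0; rewrite -e ltxx.
  by exists n', 1; split => //; rewrite -e -natr1.
exists n, (t - n%:R); split; last by rewrite addrC subrK.
- by rewrite subr_gt0 lt_neqAle ne tl.
- by move: tu; rewrite -natr1; lra.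
Qed.

Lemma nat_frac_decomp_uniq (i k : nat) (a b : R) : 0 < a -> a <= 1 -> 0 < b -> b <= 1 ->
  i%:R + a = k%:R + b -> i = k.
Proof.
move=> a0 a1 b0 b1 e; case: (ltngtP i k) => // [ik|ki].
- have : i%:R + 1 <= k%:R :> R by rewrite natr1 ler_nat.
  by move=> ?; exfalso; lra.
- have : k%:R + 1 <= i%:R :> R by rewrite natr1 ler_nat.
  by move=> ?; exfalso; lra.
Qed.

End RealFacts.

Section Slots.
Variables (R : realType) (E : normedModType R).

Lemma upd_hcons (h : nat -> E) v b : upd (hcons v h) 0 b = hcons b h.
Proof. by apply/funext => -[|m]. Qed.

Lemma upd_tail (h : nat -> E) i b : (fun m => upd h i.+1 b m.+1) = upd (fun m => h m.+1) i b.
Proof. by apply/funext => m; rewrite /upd eqSS. Qed.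

Lemma hcons_eta (h : nat -> E) : h = hcons (h 0%N) (fun m => h m.+1).
Proof. by apply/funext => -[|m]. Qed.

Lemma hprod_ge0 i (h : nat -> E) : 0 <= hprod i h.
Proof. by apply: prodr_ge0 => m _. Qed.

Lemma hprodS i (h : nat -> E) : hprod i.+1 h = `|h 0%N| * hprod i (fun m => h m.+1).
Proof. by rewrite /hprod big_ord_recl. Qed.

End Slots.

Section Scale.
Variables (R : realType) (r0 : R) (X : R -> normedModType R).
Variable j : forall s r : R, X r -> X s.
Arguments j : clear implicits.
Variables (E : normedModType R) (U : set E).
Hypothesis hj : forall s r, 0 < s -> s <= r -> r <= r0 -> bdd_lin (j s r) /\ injective (j s r).
Hypothesis hjid : forall s, 0 < s -> s <= r0 -> forall x : X s, j s s x = x.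
Hypothesis hjcomp : forall s c r, 0 < s -> s <= c -> c <= r -> r <= r0 ->
  forall x : X r, j s c (j c r x) = j s r x.
Hypothesis hU : open U.

Lemma j_linear s r : 0 < s -> s <= r -> r <= r0 -> linear (j s r).
Proof. by move=> s0 sr rr; case: (hj s0 sr rr) => -[]. Qed.

Lemma j_bound s r : 0 < s -> s <= r -> r <= r0 ->
  exists2 C : R, 0 <= C & forall x, `|j s r x| <= C * `|x|.
Proof. by move=> s0 sr rr; case: (hj s0 sr rr) => /bdd_lin_bound. Qed.

Lemma j_inj s r : 0 < s -> s <= r -> r <= r0 -> injective (j s r).
Proof. by move=> s0 sr rr; case: (hj s0 sr rr). Qed.

Lemma open_shift u : U u -> exists2 d : R, 0 < d & forall v, `|v| < d -> U (u + v).
Proof.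
move=> Uu; have : nbhs u U by move: hU; rewrite openE => /(_ u Uu).
rewrite nbhs_ballP => -[d d0 hd]; exists d => // v hv; apply: hd.
by rewrite -ball_normE /ball_ /= opprD addrA subrr sub0r normrN.
Qed.

(** * Operator families with a loss of scale *)

(* A family M s r u p : X r -> X s is only controlled when r - s exceeds its
   loss of scale [l]; Hoelder continuity of exponent [a] costs [a] more.  The
   parameter [p] carries the increments of a derivative and [w p] the product
   of their norms, so that the bounds are bounds on multilinear operators. *)
Definition family (P : Type) := forall s r : R, E -> P -> X r -> X s.

Record holder_family (P : Type) (w : P -> R) (l g : R) (M : family P) : Prop := {
  hf_loss_ge0 : 0 <= l;
  hf_weight_ge0 : forall p, 0 <= w p;
  hf_linear : forall s r, 0 < s -> r <= r0 -> l < r - s -> forall u, U u -> forall p,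
    linear (M s r u p);
  hf_jl : forall s s' r, 0 < s -> s <= s' -> s' <= r -> r <= r0 -> l < r - s' ->
    forall u, U u -> forall p x, j s s' (M s' r u p x) = M s r u p x;
  hf_jr : forall s r r', 0 < s -> s <= r -> r <= r' -> r' <= r0 -> l < r - s ->
    forall u, U u -> forall p x, M s r u p (j r r' x) = M s r' u p x;
  hf_bounded : forall s r, 0 < s -> r <= r0 -> l < r - s ->
    exists2 C : R, 0 <= C & forall u, U u -> forall p x, `|M s r u p x| <= C * w p * `|x|;
  hf_holder : forall a : R, 0 < a -> a <= 1 -> a < g ->
    forall s r, 0 < s -> r <= r0 -> l + a < r - s ->
    exists2 C : R, 0 <= C & forall u v, U u -> U v -> forall p x,
      `|M s r u p x - M s r v p x| <= C * (`|u - v| `^ a) * w p * `|x| }.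

Definition is_family_deriv (P : Type) (w : P -> R) (M : family P) (DM : family (P * E)) s r :=
  (forall u, U u -> forall e : R, 0 < e -> exists2 d : R, 0 < d &
     forall v, `|v| < d -> U (u + v) -> forall p x,
       `|M s r (u + v) p x - M s r u p x - DM s r u (p, v) x| <= e * `|v| * w p * `|x|) /\
  (forall u, U u -> forall p x, linear (fun v => DM s r u (p, v) x)).

Definition deriv_weight (P : Type) (w : P -> R) : P * E -> R := fun pv => w pv.1 * `|pv.2|.

(* Each derivative costs one unit of scale gap and one unit of the regularity
   budget [g], as in [t < min(gamma, r - s)] for (gamma,0)-regularity. *)
Fixpoint smooth_family (k : nat) (P : Type) (w : P -> R) (l g : R) (M : family P) : Prop :=
  holder_family w l g M /\
  if k is k'.+1 then exists2 DM : family (P * E),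
      (forall s r, 0 < s -> r <= r0 -> l + 1 < r - s -> is_family_deriv w M DM s r) &
      smooth_family k' (deriv_weight w) (l + 1) (g - 1) DM
  else True.

Lemma smooth_family_holder k P (w : P -> R) l g M :
  smooth_family k w l g M -> holder_family w l g M.
Proof. by case: k => [[]|k []]. Qed.

Lemma holder_family_le P (w : P -> R) l g g' M : g' <= g ->
  holder_family w l g M -> holder_family w l g' M.
Proof.
move=> gg [h1 h2 h3 h4 h5 h6 h7]; split => // a a0 a1 ag; apply: h7 => //.
exact: lt_le_trans ag gg.
Qed.

Lemma smooth_family_le k k' P (w : P -> R) l g g' M : (k' <= k)%N -> g' <= g ->
  smooth_family k w l g M -> smooth_family k' w l g' M.
Proof.
elim: k k' P w l g g' M => [|k IH] [|k'] P w l g g' M //= kk gg [L D].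
- by split => //; apply: holder_family_le L.
- by split => //; apply: holder_family_le L.
split; first exact: holder_family_le L.
by case: D => DM F G; exists DM => //; apply: IH G => //; rewrite lerB.
Qed.

Lemma holder_family_reindex P P' (w : P -> R) (w' : P' -> R) (f : P' -> P) l g M :
  (forall p, w (f p) = w' p) -> holder_family w l g M ->
  holder_family w' l g (fun s r u p => M s r u (f p)).
Proof.
move=> hw [h1 h2 h3 h4 h5 h6 h7]; split => //.
- by move=> p; rewrite -hw.
- by move=> s r *; apply: h3.
- by move=> *; apply: h4.
- by move=> *; apply: h5.
- move=> s r s0 rr lr; have [C C0 hC] := h6 s r s0 rr lr.
  by exists C => // u Uu p x; rewrite -hw hC.
- move=> a a0 a1 ag s r s0 rr lr; have [C C0 hC] := h7 a a0 a1 ag s r s0 rr lr.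
  by exists C => // u v Uu Uv p x; rewrite -hw hC.
Qed.

Lemma smooth_family_reindex k P P' (w : P -> R) (w' : P' -> R) (f : P' -> P) l g M :
  (forall p, w (f p) = w' p) -> smooth_family k w l g M ->
  smooth_family k w' l g (fun s r u p => M s r u (f p)).
Proof.
elim: k P P' w w' f l g M => [|k IH] P P' w w' f l g M hw [L D].
  by split => //; apply: holder_family_reindex L.
split; first exact: holder_family_reindex L.
case: D => DM F G; exists (fun s r u pv => DM s r u (f pv.1, pv.2)).
  move=> s r s0 rr lr; have [F1 F2] := F s r s0 rr lr; split => [u Uu e e0|u Uu p].
    have [d d0 hd] := F1 u Uu e e0; exists d => // v hv Uv p x.
    by rewrite -hw; apply: hd.
  by move=> x a v1 v2; apply: F2.
apply: (IH _ _ _ _ (fun pv : P' * E => (f pv.1, pv.2))) G.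
by move=> [p v]; rewrite /deriv_weight /= hw.
Qed.

Definition fam_add P (A C : family P) : family P :=
  fun s r u p x => A s r u p x + C s r u p x.
Arguments fam_add {P} A C s r u p x.

Lemma holder_family_add P (w : P -> R) l g (A C : family P) :
  holder_family w l g A -> holder_family w l g C -> holder_family w l g (fam_add A C).
Proof.
move=> LA LC; split; [exact: hf_loss_ge0 LA|exact: hf_weight_ge0 LA| | | | |].
- move=> s r s0 rr lr u Uu p a x y.
  by rewrite /fam_add (hf_linear LA) // (hf_linear LC) // addrACA scalerDr.
- move=> s s' r s0 ss sr rr lr u Uu p x.
  rewrite /fam_add (GRing.semilinear_linear (j_linear _ _ _)).2 ?(le_trans sr) //.
  by rewrite (hf_jl LA) // (hf_jl LC).
- by move=> s r r' *; rewrite /fam_add (hf_jr LA) // (hf_jr LC).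
- move=> s r s0 rr lr; have [C1 C10 h1] := hf_bounded LA s0 rr lr.
  have [C2 C20 h2] := hf_bounded LC s0 rr lr.
  exists (C1 + C2) => [|u Uu p x]; first exact: addr_ge0.
  apply: le_trans (ler_normD _ _) _.
  by rewrite !mulrDl; apply: lerD; [apply: h1|apply: h2].
- move=> a a0 a1 ag s r s0 rr lr.
  have [C1 C10 h1] := hf_holder LA a0 a1 ag s0 rr lr.
  have [C2 C20 h2] := hf_holder LC a0 a1 ag s0 rr lr.
  exists (C1 + C2) => [|u v Uu Uv p x]; first exact: addr_ge0.
  rewrite /fam_add opprD addrACA; apply: le_trans (ler_normD _ _) _.
  by rewrite !mulrDl; apply: lerD; [apply: h1|apply: h2].
Qed.

Lemma is_family_deriv_add P (w : P -> R) (A C : family P) DA DC s r :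
  is_family_deriv w A DA s r -> is_family_deriv w C DC s r ->
  is_family_deriv w (fam_add A C) (fam_add DA DC) s r.
Proof.
move=> [F1 L1] [F2 L2]; split=> [u Uu e e0|u Uu p x a v1 v2]; last first.
  by rewrite /fam_add L1 // L2 // addrACA scalerDr.
have e20 : 0 < e / 2 by rewrite divr_gt0.
have [d1 d10 h1] := F1 u Uu _ e20; have [d2 d20 h2] := F2 u Uu _ e20.
exists (Num.min d1 d2) => [|v]; first by rewrite lt_min d10.
rewrite lt_min => /andP[v1 v2] Uv p x.
rewrite /fam_add addrBB_split; apply: le_trans (ler_normD _ _) _.
rewrite [e in X in _ <= X](splitr e) !mulrDl.
by apply: lerD; [apply: h1 | apply: h2].
Qed.

Lemma smooth_family_add k P (w : P -> R) l g (A C : family P) :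
  smooth_family k w l g A -> smooth_family k w l g C ->
  smooth_family k w l g (fam_add A C).
Proof.
elim: k P w l g A C => [|k IH] P w l g A C [LA DA] [LC DC].
  by split => //; apply: holder_family_add.
split; first exact: holder_family_add.
case: DA => DA FA GA; case: DC => DC FC GC.
exists (fam_add DA DC); last exact: IH.
by move=> s r s0 rr lr; apply: is_family_deriv_add; [apply: FA|apply: FC].
Qed.

Lemma holder_family_cont P (w : P -> R) l g (M : family P) : holder_family w l g M -> 0 < g ->
  forall s r, 0 < s -> r <= r0 -> l < r - s -> forall u, U u -> forall eta : R, 0 < eta ->
  exists2 d : R, 0 < d & forall v, U v -> `|u - v| < d ->
    forall p x, `|M s r u p x - M s r v p x| <= eta * w p * `|x|.
Proof.
move=> LM g0 s r s0 rr lr u Uu eta eta0.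
have gap : 0 < r - s - l by lra.
have [a [a0 a1 ag al]] := exists_exponent g0 gap.
have la : l + a < r - s by lra.
have [H H0 hH] := hf_holder LM a0 a1 ag s0 rr la.
have [d d0 hd] := holder_small a0 H0 eta0.
exists d => // v Uv uv p x; apply: le_trans (hH u v Uu Uv p x) _.
rewrite -(mulrA (H * _)) -(mulrA eta) ler_wpM2r ?hd //.
by rewrite mulr_ge0 // (hf_weight_ge0 LM).
Qed.

(** * Composition products *)

(* By equivariance the composition does not depend on the intermediate scale
   (comp_scale_indep); the midpoint of the admissible range is a canonical choice. *)
Definition mid_scale (la lc s r : R) := s + la + (r - s - la - lc) / 2.

Lemma mid_scale_gap la lc s r : la + lc < r - s ->
  la < mid_scale la lc s r - s /\ lc < r - mid_scale la lc s r.
Proof. by rewrite /mid_scale => h; split; lra. Qed.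

Definition fam_comp PA PC (la lc : R) (A : family PA) (C : family PC) : family (PA * PC) :=
  fun s r u p x => A s (mid_scale la lc s r) u p.1 (C (mid_scale la lc s r) r u p.2 x).
Arguments fam_comp {PA PC} la lc A C s r u p x.

(* The Leibniz rule; the differentiated factor is given one more unit of loss. *)
Definition fam_comp_deriv PA PC la lc (A : family PA) (C : family PC)
    (DA : family (PA * E)) (DC : family (PC * E)) : family ((PA * PC) * E) :=
  fam_add (fun s r u pv => fam_comp (la + 1) lc DA C s r u ((pv.1.1, pv.2), pv.1.2))
          (fun s r u pv => fam_comp la (lc + 1) A DC s r u (pv.1.1, (pv.1.2, pv.2))).
Arguments fam_comp_deriv {PA PC} la lc A C DA DC s r u p x.

Section Composition.
Variables (PA PC : Type) (wA : PA -> R) (wC : PC -> R) (la lc ga gc : R).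
Variables (A : family PA) (C : family PC).
Arguments A : clear implicits.
Arguments C : clear implicits.
Hypotheses (LA : holder_family wA la ga A) (LC : holder_family wC lc gc C).

Lemma comp_scale_indep_le s r c1 c2 u u' pa pc (x : X r) : 0 < s -> r <= r0 ->
  la < c1 - s -> lc < r - c2 -> c1 <= c2 -> U u -> U u' ->
  A s c1 u pa (C c1 r u' pc x) = A s c2 u pa (C c2 r u' pc x).
Proof.
move=> s0 rr h1 h2 c12 Uu Uu'.
have la0 := hf_loss_ge0 LA; have lc0 := hf_loss_ge0 LC.
have c10 : 0 < c1 by lra.
have c2r : c2 <= r by lra.
have c2r0 : c2 <= r0 by lra.
have sc1 : s <= c1 by lra.
by rewrite -(hf_jl LC c10 c12 c2r rr h2 Uu') (hf_jr LA s0 sc1 c12 c2r0 h1 Uu).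
Qed.

Lemma comp_scale_indep s r c1 c2 u u' pa pc (x : X r) : 0 < s -> r <= r0 ->
  la < c1 - s -> lc < r - c1 -> la < c2 - s -> lc < r - c2 -> U u -> U u' ->
  A s c1 u pa (C c1 r u' pc x) = A s c2 u pa (C c2 r u' pc x).
Proof.
move=> s0 rr a1 b1 a2 b2 Uu Uu'; case: (leP c1 c2) => c12.
  exact: comp_scale_indep_le.
by symmetry; apply: comp_scale_indep_le => //; apply: ltW.
Qed.

(* Split A(u)C(u) - A(v)C(v) = (A(u) - A(v))C(u) + A(v)(C(u) - C(v)), each term
   with its own intermediate scale leaving room for the Hoelder loss [a] of the
   factor that is differenced. *)
Lemma comp_holder a s r : 0 < a -> a <= 1 -> a < ga -> a < gc -> 0 < s -> r <= r0 ->
  la + lc + a < r - s ->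
  exists2 K : R, 0 <= K & forall u v, U u -> U v -> forall p x,
    `|fam_comp la lc A C s r u p x - fam_comp la lc A C s r v p x|
      <= K * (`|u - v| `^ a) * (wA p.1 * wC p.2) * `|x|.
Proof.
move=> a0 a1 aga agc s0 rr lr.
have la0 := hf_loss_ge0 LA; have lc0 := hf_loss_ge0 LC.
have wA0 := hf_weight_ge0 LA; have wC0 := hf_weight_ge0 LC.
have [|h1 h2] := @mid_scale_gap la lc s r; first lra.
set c := mid_scale la lc s r in h1 h2 *.
pose e := r - s - la - lc - a; pose c1 := s + la + a + e / 2; pose c2 := s + la + e / 2.
have [c1r c1a c10 c1b] : [/\ c1 <= r0, la + a < c1 - s, 0 < c1 & lc < r - c1].
  by rewrite /c1 /e; split; lra.
have [c2r c2a c20 c2b] : [/\ c2 <= r0, la < c2 - s, 0 < c2 & lc + a < r - c2].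
  by rewrite /c2 /e; split; lra.
have [c1a' c2b'] : la < c1 - s /\ lc < r - c2 by split; lra.
have [HA HA0 hA] := hf_holder LA a0 a1 aga s0 c1r c1a.
have [CC CC0 hCC] := hf_bounded LC c10 rr c1b.
have [CA CA0 hCA] := hf_bounded LA s0 c2r c2a.
have [HC HC0 hC] := hf_holder LC a0 a1 agc c20 rr c2b.
exists (HA * CC + CA * HC) => [|u v Uu Uv [pa pc] x]; first by rewrite addr_ge0 ?mulr_ge0.
rewrite /fam_comp /= -/c (comp_scale_indep _ _ _ s0 rr h1 h2 c1a' c1b Uu Uu).
rewrite (comp_scale_indep _ _ _ s0 rr h1 h2 c2a c2b' Uv Uv).
have mid := comp_scale_indep pa pc x s0 rr c1a' c1b c2a c2b' Uv Uu.
set P := A s c1 u pa _; set Q := A s c2 v pa _.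
have -> : P - Q = (P - A s c1 v pa (C c1 r u pc x)) + (A s c2 v pa (C c2 r u pc x) - Q).
  by rewrite -mid addrA subrK.
apply: le_trans (ler_normD _ _) _.
set z := `|u - v| `^ a; have z0 : 0 <= z by apply: powR_ge0.
have hP : `|P - A s c1 v pa (C c1 r u pc x)| <= HA * z * wA pa * (CC * wC pc * `|x|).
  apply: le_trans (hA u v Uu Uv pa _) _.
  by rewrite ler_wpM2l ?hCC // !mulr_ge0.
have hQ : `|A s c2 v pa (C c2 r u pc x) - Q| <= CA * wA pa * (HC * z * wC pc * `|x|).
  rewrite /Q -(zmod_morphism_linear (hf_linear LA s0 c2r c2a Uv pa)).
  apply: le_trans (hCA v Uv pa _) _.
  by rewrite ler_wpM2l ?hC // mulr_ge0.
apply: le_trans (lerD hP hQ) _.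
by apply: le_of_eq; ring.
Qed.

Lemma holder_family_comp : holder_family (fun p => wA p.1 * wC p.2) (la + lc)
  (Num.min ga gc) (fam_comp la lc A C).
Proof.
have la0 := hf_loss_ge0 LA; have lc0 := hf_loss_ge0 LC.
split.
- exact: addr_ge0.
- by move=> p; rewrite mulr_ge0 ?(hf_weight_ge0 LA) ?(hf_weight_ge0 LC).
- move=> s r s0 rr lr u Uu p a x y; rewrite /fam_comp.
  have [h1 h2] := mid_scale_gap lr.
  have c0 : 0 < mid_scale la lc s r by lra.
  have cr : mid_scale la lc s r <= r0 by lra.
  by rewrite (hf_linear LC c0 rr h2 Uu) (hf_linear LA s0 cr h1 Uu).
- move=> s s' r s0 ss sr rr lr u Uu p x; rewrite /fam_comp.
  have [h1 h2] := mid_scale_gap lr.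
  have c0 : mid_scale la lc s' r <= r0 by lra.
  have c1 : s' <= mid_scale la lc s' r by lra.
  rewrite (hf_jl LA s0 ss c1 c0 h1 Uu).
  have [|k1 k2] := @mid_scale_gap la lc s r; first lra.
  by apply: comp_scale_indep => //; lra.
- move=> s r r' s0 sr rr rr' lr u Uu p x; rewrite /fam_comp.
  have [h1 h2] := mid_scale_gap lr.
  have c0 : 0 < mid_scale la lc s r by lra.
  have c1 : mid_scale la lc s r <= r by lra.
  rewrite (hf_jr LC c0 c1 rr rr' h2 Uu).
  have [|k1 k2] := @mid_scale_gap la lc s r'; first lra.
  by apply: comp_scale_indep => //; lra.
- move=> s r s0 rr lr; have [h1 h2] := mid_scale_gap lr.
  set c := mid_scale la lc s r in h1 h2 *.
  have cr0 : c <= r0 by lra.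
  have c0 : 0 < c by lra.
  have [C1 C10 hC1] := hf_bounded LA s0 cr0 h1.
  have [C2 C20 hC2] := hf_bounded LC c0 rr h2.
  exists (C1 * C2) => [|u Uu [pa pc] x]; first exact: mulr_ge0.
  rewrite /fam_comp /= -/c; apply: le_trans (hC1 _ Uu _ _) _.
  apply: le_trans (ler_wpM2l _ (hC2 _ Uu pc x)) _; first by rewrite mulr_ge0 ?(hf_weight_ge0 LA).
  by apply: le_of_eq; ring.
- move=> a a0 a1; rewrite lt_min => /andP[aga agc] s r s0 rr lr.
  by apply: comp_holder.
Qed.

Section Leibniz.
Variables (DA : family (PA * E)) (DC : family (PC * E)) (gD : R).
Arguments DA : clear implicits.
Arguments DC : clear implicits.
Hypothesis LDA : holder_family (deriv_weight wA) (la + 1) gD DA.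

Lemma comp_remainder_split s r u v pa pc x : 0 < s -> r <= r0 -> la + lc + 1 < r - s ->
  U u -> U (u + v) ->
  let c1 := mid_scale (la + 1) lc s r in let c2 := mid_scale la (lc + 1) s r in
  let y := C c1 r (u + v) pc x in
  fam_comp la lc A C s r (u + v) (pa, pc) x - fam_comp la lc A C s r u (pa, pc) x
    - fam_comp_deriv la lc A C DA DC s r u ((pa, pc), v) x =
  (A s c1 (u + v) pa y - A s c1 u pa y - DA s c1 u (pa, v) y)
  + DA s c1 u (pa, v) (y - C c1 r u pc x)
  + A s c2 u pa (C c2 r (u + v) pc x - C c2 r u pc x - DC c2 r u (pc, v) x).
Proof.
move=> s0 rr lr Uu Uv c1 c2 y.
have la0 := hf_loss_ge0 LA; have lc0 := hf_loss_ge0 LC.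
have [|h1 h2] := @mid_scale_gap la lc s r; first lra.
have [|k1 k2] := @mid_scale_gap (la + 1) lc s r; first lra.
have [|m1 m2] := @mid_scale_gap la (lc + 1) s r; first lra.
rewrite -/c1 -/c2 in k1 k2 m1 m2.
have k1' : la < c1 - s by lra.
have m2' : lc < r - c2 by lra.
have c1r : c1 <= r0 by lra.
have c2r : c2 <= r0 by lra.
rewrite /fam_comp_deriv /fam_add /fam_comp /= -/c1 -/c2.
rewrite (comp_scale_indep _ _ _ s0 rr h1 h2 k1' k2 Uv Uv).
rewrite (comp_scale_indep _ _ _ s0 rr h1 h2 m1 m2' Uu Uu).
rewrite (zmod_morphism_linear (hf_linear LDA s0 c1r k1 Uu (pa, v))).
rewrite !(zmod_morphism_linear (hf_linear LA s0 c2r m1 Uu pa)).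
rewrite -(comp_scale_indep _ _ _ s0 rr k1' k2 m1 m2' Uu Uv) -/y.
exact: subrD_insert.
Qed.

Lemma fam_comp_deriv_linear s r u p x : 0 < s -> r <= r0 -> la + lc + 1 < r - s -> U u ->
  (forall u, U u -> forall p x, linear (fun v => DA s (mid_scale (la + 1) lc s r) u (p, v) x)) ->
  (forall u, U u -> forall p x, linear (fun v => DC (mid_scale la (lc + 1) s r) r u (p, v) x)) ->
  linear (fun v => fam_comp_deriv la lc A C DA DC s r u (p, v) x).
Proof.
move=> s0 rr lr Uu LinA LinC a v1 v2; have la0 := hf_loss_ge0 LA; have lc0 := hf_loss_ge0 LC.
have [|m1 m2] := @mid_scale_gap la (lc + 1) s r; first lra.
have c2r : mid_scale la (lc + 1) s r <= r0 by lra.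
rewrite /fam_comp_deriv /fam_add /fam_comp /= LinA // LinC // (hf_linear LA s0 c2r m1 Uu).
by rewrite addrACA scalerDr.
Qed.

Lemma is_family_deriv_comp s r : 0 < gc -> 0 < s -> r <= r0 -> la + lc + 1 < r - s ->
  is_family_deriv wA A DA s (mid_scale (la + 1) lc s r) ->
  is_family_deriv wC C DC (mid_scale la (lc + 1) s r) r ->
  is_family_deriv (fun p => wA p.1 * wC p.2) (fam_comp la lc A C)
    (fam_comp_deriv la lc A C DA DC) s r.
Proof.
move=> gc0 s0 rr lr [FA LinA] [FC LinC].
split=> [u Uu e e0|u Uu p x]; last exact: fam_comp_deriv_linear.
have la0 := hf_loss_ge0 LA; have lc0 := hf_loss_ge0 LC.
have wA0 := hf_weight_ge0 LA; have wC0 := hf_weight_ge0 LC.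
have [|k1 k2] := @mid_scale_gap (la + 1) lc s r; first lra.
have [|m1 m2] := @mid_scale_gap la (lc + 1) s r; first lra.
set c1 := mid_scale (la + 1) lc s r in k1 k2 FA *.
set c2 := mid_scale la (lc + 1) s r in m1 m2 FC *.
have [c10 c1r c2r] : [/\ 0 < c1, c1 <= r0 & c2 <= r0] by split; lra.
have [CC CC0 hCC] := hf_bounded LC c10 rr k2.
have [CA CA0 hCA] := hf_bounded LA s0 c2r m1.
have [CD CD0 hCD] := hf_bounded LDA s0 c1r k1.
have e20 : 0 < e / 2 by rewrite divr_gt0.
have [e1 e10 he1] := small_factor (addr_ge0 CC0 CA0) e20.
have [eta eta0 heta] := small_factor CD0 e20.
have [d1 d10 hd1] := FA u Uu e1 e10.
have [d2 d20 hd2] := FC u Uu e1 e10.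
have [d3 d30 hd3] := holder_family_cont LC gc0 c10 rr k2 Uu eta0.
exists (Num.min d1 (Num.min d2 d3)) => [|v]; first by rewrite !lt_min d10 d20 d30.
rewrite !lt_min => /and3P[v1 v2 v3] Uv [pa pc] x.
rewrite comp_remainder_split // -/c1 -/c2.
set y := C c1 r (u + v) pc x.
have T1 : `|A s c1 (u + v) pa y - A s c1 u pa y - DA s c1 u (pa, v) y| <=
          e1 * `|v| * wA pa * (CC * wC pc * `|x|).
  apply: le_trans (hd1 v v1 Uv pa y) _.
  by rewrite ler_wpM2l ?hCC // !mulr_ge0 // ltW.
have T2 : `|DA s c1 u (pa, v) (y - C c1 r u pc x)| <=
          CD * (wA pa * `|v|) * (eta * wC pc * `|x|).
  apply: le_trans (hCD u Uu (pa, v) _) _.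
  rewrite ler_wpM2l ?mulr_ge0 // distrC; apply: hd3 => //.
  by rewrite opprD addrA subrr sub0r normrN.
have T3 : `|A s c2 u pa (C c2 r (u + v) pc x - C c2 r u pc x - DC c2 r u (pc, v) x)|
          <= CA * wA pa * (e1 * `|v| * wC pc * `|x|).
  by apply: le_trans (hCA u Uu pa _) _; rewrite ler_wpM2l ?mulr_ge0 ?hd2.
apply: le_trans (ler_normD _ _) _.
apply: le_trans (lerD (le_trans (ler_normD _ _) (lerD T1 T2)) T3) _.
have W0 : 0 <= `|v| * (wA pa * wC pc) * `|x| by rewrite !mulr_ge0.
by have := ler_wpM2r W0 (lerD he1 heta); lra.
Qed.

End Leibniz.

End Composition.

Lemma smooth_family_comp k PA PC (wA : PA -> R) (wC : PC -> R) la lc g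
    (A : family PA) (C : family PC) :
  k%:R < g -> smooth_family k wA la g A -> smooth_family k wC lc g C ->
  smooth_family k (fun p => wA p.1 * wC p.2) (la + lc) g (fam_comp la lc A C).
Proof.
elim: k PA PC wA wC la lc g A C => [|k IH] PA PC wA wC la lc g A C kg GA GC.
  split => //; rewrite -[g]minxx.
  by apply: holder_family_comp; apply: smooth_family_holder; [exact: GA|exact: GC].
have gg : g - 1 <= g by lra.
have GA' := smooth_family_le (leqnSn k) gg GA.
have GC' := smooth_family_le (leqnSn k) gg GC.
case: GA => LA [DA FA GDA]; case: GC => LC [DC FC GDC].
have kg' : k%:R < g - 1 by move: kg; rewrite -natr1; lra.
have g0 : 0 < g by move: kg; rewrite -natr1; have := ler0n R k; lra.
have la0 := hf_loss_ge0 LA; have lc0 := hf_loss_ge0 LC.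
split; first by rewrite -[g]minxx; apply: holder_family_comp.
exists (fam_comp_deriv la lc A C DA DC).
  move=> s r s0 rr lr.
  apply: (is_family_deriv_comp LA LC (smooth_family_holder GDA)) => //.
    by apply: FA => //; rewrite /mid_scale; lra.
  by apply: FC => //; rewrite /mid_scale; lra.
have G1 := smooth_family_reindex (f := fun p : (PA * PC) * E => ((p.1.1, p.2), p.1.2))
  (w' := deriv_weight (fun p => wA p.1 * wC p.2)) _ (IH _ _ _ _ _ _ _ _ _ kg' GDA GC').
have G2 := smooth_family_reindex (f := fun p : (PA * PC) * E => (p.1.1, (p.1.2, p.2)))
  (w' := deriv_weight (fun p => wA p.1 * wC p.2)) _ (IH _ _ _ _ _ _ _ _ _ kg' GA' GDC).
rewrite (_ : la + 1 + lc = la + lc + 1) in G1; last by ring.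
rewrite (_ : la + (lc + 1) = la + lc + 1) in G2; last by ring.
by apply: smooth_family_add; [apply: G1|apply: G2] => -[[pa pc] v]; rewrite /deriv_weight /=; ring.
Qed.

(** * Chains of derivatives *)

Section DerivativeChains.
Variables (V W : normedModType R).

Definition multilin_of (Dd : E -> (nat -> E) -> V -> W) (m : nat) (u : E) :=
  [/\ (forall h h' x, (forall i, (i < m)%N -> h i = h' i) -> Dd u h x = Dd u h' x),
      (forall h, bdd_lin (Dd u h)),
      (forall h i x (a : R) (b c : E), (i < m)%N ->
         Dd u (upd h i (a *: b + c)) x = a *: Dd u (upd h i b) x + Dd u (upd h i c) x) &
      (exists C : R, forall h x, `|Dd u h x| <= C * hprod m h * `|x|)].

Definition Ck_alpha_with (F : E -> V -> W) (k : nat) (alpha : R)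
    (D : nat -> E -> (nat -> E) -> V -> W) :=
  [/\ (forall u h x, U u -> D 0%N u h x = F u x),
      (forall i u, (i <= k)%N -> U u -> multilin_at D i u),
      (forall i u, (i < k)%N -> U u -> forall eps : R, 0 < eps ->
         exists2 del : R, 0 < del & forall v, `|v| < del -> U (u + v) ->
           forall h x, `|D i (u + v) h x - D i u h x - D i.+1 u (hcons v h) x|
                       <= eps * `|v| * hprod i h * `|x|),
      (forall i, (i <= k)%N -> exists C : R, forall u, U u ->
         forall h x, `|D i u h x| <= C * hprod i h * `|x|) &
      (exists C : R, forall u v, U u -> U v ->
         forall h x, `|D k u h x - D k v h x|
                     <= C * (`|u - v| `^ alpha) * hprod k h * `|x|)].

Definition deriv_chain (D : nat -> E -> (nat -> E) -> V -> W) (n : nat) :=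
  (forall i, (i < n)%N -> forall u, U u -> forall e : R, 0 < e -> exists2 d : R, 0 < d &
     forall v, `|v| < d -> U (u + v) -> forall h x,
       `|D i (u + v) h x - D i u h x - D i.+1 u (hcons v h) x| <= e * `|v| * hprod i h * `|x|) /\
  (forall i, (0 < i <= n)%N -> forall u, U u -> forall h x (a : R) v,
     D i u (hcons (a *: v) h) x = a *: D i u (hcons v h) x).

(* The i-th member of [D] has [n + i] multilinear slots: [n] inherited ones and
   [i] derivative directions. *)
Definition Ck_alpha_shift (n : nat) (D : nat -> E -> (nat -> E) -> V -> W) (k : nat) (a : R) :=
  [/\ (forall i u, (i <= k)%N -> U u -> multilin_of (D i) (n + i) u),
      (forall i u, (i < k)%N -> U u -> forall eps : R, 0 < eps ->
         exists2 del : R, 0 < del & forall v, `|v| < del -> U (u + v) ->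
           forall h x, `|D i (u + v) h x - D i u h x - D i.+1 u (hcons v h) x|
                       <= eps * `|v| * hprod (n + i) h * `|x|),
      (forall i, (i <= k)%N -> exists C : R, forall u, U u ->
         forall h x, `|D i u h x| <= C * hprod (n + i) h * `|x|) &
      (exists C : R, forall u v, U u -> U v ->
         forall h x, `|D k u h x - D k v h x| <= C * (`|u - v| `^ a) * hprod (n + k) h * `|x|)].

Lemma multilin_hcons (Dd : E -> (nat -> E) -> V -> W) i u h x : (0 < i)%N ->
  multilin_of Dd i u -> linear (fun v => Dd u (hcons v h) x).
Proof.
move=> i0 [_ _ hl _] a v1 v2 /=.
by have := hl (hcons v1 h) 0%N x a v1 v2 i0; rewrite !upd_hcons.
Qed.

Lemma Ck_alpha_with_chain F k a D : Ck_alpha_with F k a D -> deriv_chain D k.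
Proof.
case=> _ hm hf _ _; split=> [i ik u Uu|i /andP[i0 ik] u Uu h x b v]; first exact: hf.
exact: (scalable_linear (multilin_hcons h x i0 (hm i u ik Uu))).
Qed.

Lemma frechet_unique (Y : normedModType R) (F1 F2 L1 L2 : E -> Y) (K : R) u :
  U u -> 0 <= K ->
  (forall (a : R) v, L1 (a *: v) = a *: L1 v) ->
  (forall (a : R) v, L2 (a *: v) = a *: L2 v) ->
  (forall u', U u' -> F1 u' = F2 u') ->
  (forall e : R, 0 < e -> exists2 d : R, 0 < d & forall v, `|v| < d -> U (u + v) ->
     `|F1 (u + v) - F1 u - L1 v| <= e * `|v| * K) ->
  (forall e : R, 0 < e -> exists2 d : R, 0 < d & forall v, `|v| < d -> U (u + v) ->
     `|F2 (u + v) - F2 u - L2 v| <= e * `|v| * K) ->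
  forall v, L1 v = L2 v.
Proof.
move=> Uu K0 h1 h2 hF f1 f2; apply: homogeneous_eq => // e e0.
have e20 : 0 < e / 2 by rewrite divr_gt0.
have [e' e'0 he'] := small_factor K0 e20.
have [d1 d10 hd1] := f1 _ e'0; have [d2 d20 hd2] := f2 _ e'0.
have [d3 d30 hd3] := open_shift Uu.
exists (Num.min d1 (Num.min d2 d3)) => [|v]; first by rewrite !lt_min d10 d20 d30.
rewrite !lt_min => /and3P[v1 v2 v3]; have Uv := hd3 v v3.
have -> : L1 v - L2 v = (F2 (u + v) - F2 u - L2 v) - (F1 (u + v) - F1 u - L1 v).
  by rewrite !hF // opprB [RHS]addrC addrA subrK.
apply: le_trans (ler_normB _ _) _.
apply: le_trans (lerD (hd2 v v2 Uv) (hd1 v v1 Uv)) _.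
by have := ler_wpM2r (normr_ge0 v) he'; lra.
Qed.

Lemma deriv_chain_unique (D D' : nat -> E -> (nat -> E) -> V -> W) n n' :
  deriv_chain D n -> deriv_chain D' n' ->
  (forall u h x, U u -> D 0%N u h x = D' 0%N u h x) ->
  forall i, (i <= n)%N -> (i <= n')%N -> forall u h x, U u -> D i u h x = D' i u h x.
Proof.
move=> [F1 H1] [F2 H2] h0; elim=> [|i IH] // i1 i2 u h x Uu.
rewrite (hcons_eta h); set th := fun m => h m.+1.
apply: (@frechet_unique W (fun u' => D i u' th x) (fun u' => D' i u' th x)
   (fun v => D i.+1 u (hcons v th) x) (fun v => D' i.+1 u (hcons v th) x)
   (hprod i th * `|x|) u) => //.
- by rewrite mulr_ge0 ?hprod_ge0.
- by move=> a v; apply: H1.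
- by move=> a v; apply: H2.
- by move=> u' Uu'; apply: IH => //; apply: ltnW.
- move=> e e0; have [d d0 hd] := F1 i i1 u Uu e e0.
  by exists d => // v hv Uv; rewrite mulrA; apply: hd.
- move=> e e0; have [d d0 hd] := F2 i i2 u Uu e e0.
  by exists d => // v hv Uv; rewrite mulrA; apply: hd.
Qed.

End DerivativeChains.

Lemma deriv_chain_compl (V W W' : normedModType R) (D : nat -> E -> (nat -> E) -> V -> W) n
  (f : W -> W') : deriv_chain D n -> bdd_lin f -> deriv_chain (fun i u h x => f (D i u h x)) n.
Proof.
move=> [F H] fl; have [C C0 hC] := bdd_lin_bound fl; have lf := fl.1.
split=> [i ilt u Uu e e0|i i0 u Uu h x a v]; last by rewrite H // (scalable_linear lf).
have [e' e'0 he'] := small_factor C0 e0.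
have [d d0 hd] := F i ilt u Uu _ e'0; exists d => // v hv Uv h x.
rewrite -!(zmod_morphism_linear lf); apply: le_trans (hC _) _.
apply: le_trans (ler_wpM2l C0 (hd v hv Uv h x)) _.
have W0 : 0 <= `|v| * hprod i h * `|x| by rewrite !mulr_ge0 ?hprod_ge0.
by have := ler_wpM2r W0 he'; lra.
Qed.

Lemma deriv_chain_compr (V' V W : normedModType R) (D : nat -> E -> (nat -> E) -> V -> W) n
  (g : V' -> V) : deriv_chain D n -> bdd_lin g -> deriv_chain (fun i u h x => D i u h (g x)) n.
Proof.
move=> [F H] gl; have [C C0 hC] := bdd_lin_bound gl.
split=> [i ilt u Uu e e0|i i0 u Uu h x a v]; last exact: H.
have [e' e'0 he'] := small_factor C0 e0.
have [d d0 hd] := F i ilt u Uu _ e'0; exists d => // v hv Uv h x.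
apply: le_trans (hd v hv Uv h (g x)) _.
have P0 : 0 <= e' * `|v| * hprod i h by rewrite !mulr_ge0 ?hprod_ge0 // ltW.
apply: le_trans (ler_wpM2l P0 (hC x)) _.
have W0 : 0 <= `|v| * hprod i h * `|x| by rewrite !mulr_ge0 ?hprod_ge0.
by have := ler_wpM2r W0 he'; lra.
Qed.

(** * From smooth families to C^{k+alpha} maps *)

Section FixedScales.
Variables (s r : R).

(* [enc] reads the parameter of [M] off the first [n] slots of a sequence of
   increments, turning [M s r u] into an [n]-multilinear map. *)
Definition slot_encoding P (w : P -> R) (M : family P) n (enc : (nat -> E) -> P) :=
  [/\ forall h, w (enc h) = hprod n h,
      forall h h', (forall m, (m < n)%N -> h m = h' m) -> enc h = enc h' &
      forall u, U u -> forall h i x (b : R) (v1 v2 : E), (i < n)%N ->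
        M s r u (enc (upd h i (b *: v1 + v2))) x =
        b *: M s r u (enc (upd h i v1)) x + M s r u (enc (upd h i v2)) x].

Lemma holder_family_multilin P (w : P -> R) l g M n enc :
  holder_family w l g M -> 0 < s -> r <= r0 -> l < r - s -> slot_encoding w M n enc ->
  forall u, U u -> multilin_of (fun u h x => M s r u (enc h) x) n u.
Proof.
move=> L s0 rr lr [hw hd hm] u Uu; have [C C0 hC] := hf_bounded L s0 rr lr.
split=> [h h' x hh|h|h i x b v1 v2 iin|]; first by rewrite (hd h h').
- split; first exact: (hf_linear L).
  by exists (C * w (enc h)) => x; apply: hC.
- exact: hm.
- by exists C => h x; rewrite -hw; apply: hC.
Qed.

Lemma is_family_deriv_param_linear P (w : P -> R) (M : family P) (DM : family (P * E)) u
    (p0 p1 p2 : P) (b : R) x :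
  U u -> (forall p, 0 <= w p) -> is_family_deriv w M DM s r ->
  (forall u', U u' -> M s r u' p0 x = b *: M s r u' p1 x + M s r u' p2 x) ->
  forall v, DM s r u (p0, v) x = b *: DM s r u (p1, v) x + DM s r u (p2, v) x.
Proof.
move=> Uu w0 [FF LL] hM.
have K0 : 0 <= (w p0 + `|b| * w p1 + w p2) * `|x| by rewrite mulr_ge0 // !addr_ge0 // mulr_ge0.
apply: (frechet_unique (F1 := fun u' => M s r u' p0 x)
  (F2 := fun u' => b *: M s r u' p1 x + M s r u' p2 x) Uu K0) => //.
- exact: (scalable_linear (LL u Uu p0 x)).
- move=> a v; rewrite (scalable_linear (LL u Uu p1 x)) (scalable_linear (LL u Uu p2 x)).
  by rewrite scalerDr !scalerA mulrC.
- move=> e e0; have [d d0 hd] := FF u Uu e e0; exists d => // v hv Uv.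
  apply: le_trans (hd v hv Uv p0 x) _; rewrite -!mulrA.
  apply: ler_wpM2l; first by rewrite ltW.
  apply: ler_wpM2l => //; apply: ler_wpM2r => //.
  have := w0 p2; have : 0 <= `|b| * w p1 by rewrite mulr_ge0.
  lra.
- move=> e e0; have [d d0 hd] := FF u Uu e e0; exists d => // v hv Uv.
  rewrite addrBB_split -!scalerBr; apply: le_trans (ler_normD _ _) _.
  rewrite normrZ.
  apply: le_trans (lerD (ler_wpM2l (normr_ge0 b) (hd v hv Uv p1 x)) (hd v hv Uv p2 x)) _.
  have -> : `|b| * (e * `|v| * w p1 * `|x|) + e * `|v| * w p2 * `|x| =
     e * `|v| * ((`|b| * w p1 + w p2) * `|x|) by ring.
  apply: ler_wpM2l; first by rewrite mulr_ge0 // ltW.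
  by apply: ler_wpM2r => //; have := w0 p0; lra.
Qed.

Lemma slot_encoding_deriv P (w : P -> R) (M : family P) DM n enc :
  (forall p, 0 <= w p) -> is_family_deriv w M DM s r -> slot_encoding w M n enc ->
  slot_encoding (deriv_weight w) DM n.+1 (fun h => (enc (fun m => h m.+1), h 0%N)).
Proof.
move=> w0 FM [hw hd hm]; split.
- by move=> h; rewrite /deriv_weight /= hw hprodS mulrC.
- move=> h h' hh; rewrite (hh 0%N) // (hd (fun m => h m.+1) (fun m => h' m.+1)) // => m mn.
  exact: hh.
- move=> u Uu h [|i] x b v1 v2 iin; first exact: FM.2.
  rewrite !upd_tail; apply: (is_family_deriv_param_linear Uu w0 FM) => u' Uu'.
  exact: hm.
Qed.

Lemma holder_family_Ck_alpha_shift0 P (w : P -> R) l g M n enc a :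
  holder_family w l g M -> 0 < s -> r <= r0 -> l + a < r - s -> 0 < a -> a <= 1 -> a < g ->
  slot_encoding w M n enc -> Ck_alpha_shift n (fun _ u h x => M s r u (enc h) x) 0 a.
Proof.
move=> L s0 rr lr a0 a1 ag henc; have [hw _ _] := henc.
have lr' : l < r - s by lra.
split=> [i u|//|i|].
- rewrite leqn0 => /eqP -> Uu; rewrite addn0.
  exact: holder_family_multilin L s0 rr lr' henc u Uu.
- rewrite leqn0 => /eqP ->; have [C C0 hC] := hf_bounded L s0 rr lr'.
  by exists C => u Uu h x; rewrite addn0 -hw; apply: hC.
- have [C C0 hC] := hf_holder L a0 a1 ag s0 rr lr.
  by exists C => u v Uu Uv h x; rewrite addn0 -hw; apply: hC.
Qed.

Lemma smooth_family_Ck_alpha k P (w : P -> R) l g M n enc a :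
  smooth_family k w l g M -> 0 < s -> r <= r0 -> l + k%:R + a < r - s -> 0 < a -> a <= 1 ->
  k%:R + a < g -> slot_encoding w M n enc ->
  exists D : nat -> E -> (nat -> E) -> X r -> X s,
    Ck_alpha_shift n D k a /\ (forall u h x, U u -> D 0%N u h x = M s r u (enc h) x).
Proof.
elim: k P w l g M n enc => [|k IH] P w l g M n enc G s0 rr lr a0 a1 ag henc.
  exists (fun _ u h x => M s r u (enc h) x); split => //.
  move: lr ag; rewrite addr0 add0r => lr ag.
  exact: holder_family_Ck_alpha_shift0 (smooth_family_holder G) s0 rr lr a0 a1 ag henc.
case: G => L [DM F G]; move: lr ag; rewrite -natr1 => lr ag.
have w0 := hf_weight_ge0 L; have [hw _ _] := henc.
have k0 : 0 <= k%:R :> R by [].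
have FM : is_family_deriv w M DM s r by apply: F => //; lra.
have lr1 : l + 1 + k%:R + a < r - s by lra.
have ag1 : k%:R + a < g - 1 by lra.
have [D' [[m1 f1 b1 h1] D'0]] := IH _ _ _ _ _ _ _ G s0 rr lr1 a0 a1 ag1
  (slot_encoding_deriv w0 FM henc).
have la : l + a < r - s by lra.
have ag0 : a < g by lra.
have [m0 _ b0 _] := holder_family_Ck_alpha_shift0 L s0 rr la a0 a1 ag0 henc.
exists (fun i => if i is i'.+1 then D' i' else fun u h x => M s r u (enc h) x).
split => //; split => [[|i] u ik Uu|[|i] u ik Uu e e0|[|i] ik|]; rewrite ?addnS -?addSn.
- exact: m0.
- exact: m1.
- have [d d0 hd] := FM.1 u Uu e e0; exists d => // v hv Uv h x.
  by rewrite D'0 // addn0 -hw; apply: hd.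
- exact: f1.
- exact: b0.
- exact: b1.
- exact: h1.
Qed.

End FixedScales.

(** * The derivatives of Q *)

(* [i] derivative directions, nested as the parameters [P * E] of derivative families. *)
Fixpoint dirs (i : nat) : Type := if i is i'.+1 then (dirs i' * E)%type else unit.

Fixpoint dirs_norm (i : nat) : dirs i -> R :=
  match i return dirs i -> R with
  | 0 => fun _ => 1
  | i'.+1 => fun p => dirs_norm p.1 * `|p.2|
  end.

Fixpoint dirs_seq (i : nat) : dirs i -> nat -> E :=
  match i return dirs i -> nat -> E with
  | 0 => fun _ _ => 0
  | i'.+1 => fun p => hcons p.2 (dirs_seq p.1)
  end.

Lemma dirs_norm_hprod i (p : dirs i) : dirs_norm p = hprod i (dirs_seq p).
Proof.
elim: i p => [|i IH] p /=; first by rewrite /hprod big_ord0.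
by rewrite hprodS IH mulrC.
Qed.

Section RegularFamily.
Variable Q : forall s r : R, E -> X r -> X s.
Arguments Q : clear implicits.
Variable gamma : R.
Hypotheses (hQ : equiv_regular R j r0 gamma U Q) (gamma0 : 0 < gamma).

(* Equivariance is only assumed for strictly increasing pairs; injectivity of
   [j (s/2) s] recovers the one-sided versions. *)
Lemma Q_jl s s' r u x : 0 < s -> s <= s' -> s' < r -> r <= r0 -> U u ->
  j s s' (Q s' r u x) = Q s r u x.
Proof.
move=> s0 ss sr rr Uu; case: hQ => _ he _.
have [<-|ss'] := eqVneq s s'; first by rewrite hjid //; lra.
have s20 : 0 < s / 2 by rewrite divr_gt0.
have s2s : s / 2 <= s by lra.
have sr0 : s <= r0 by lra.
apply: (j_inj s20 s2s sr0).
have s'r0 : s' <= r0 by lra.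
rewrite (hjcomp s20 s2s ss s'r0).
by rewrite (he (s / 2) s s' r) ?(he (s / 2) s s r) //; try (split; lra); lra.
Qed.

Lemma Q_jr s r r' u x : 0 < s -> s <= r -> r <= r' -> r' <= r0 -> U u ->
  Q s r u (j r r' x) = Q s r' u x.
Proof.
move=> s0 sr rr rr0 Uu; case: hQ => _ he _.
have [e|rr'] := eqVneq r r'; first by subst r'; rewrite hjid //; lra.
have s20 : 0 < s / 2 by rewrite divr_gt0.
have s2s : s / 2 <= s by lra.
have sr0 : s <= r0 by lra.
apply: (j_inj s20 s2s sr0).
have r2 : s / 2 <= r by lra.
rewrite (he (s / 2) (s / 2) s r) ?(he (s / 2) (s / 2) s r') ?(hjcomp s20 r2 rr rr0) //;
  by try (split; lra); lra.
Qed.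

Definition Q_witness i s r (D : nat -> E -> (nat -> E) -> X r -> X s) :=
  exists a : R, [/\ 0 < a, a <= 1 & Ck_alpha_with (Q s r) i a D].
Arguments Q_witness : clear implicits.

(* A chosen witness, junk when there is none; by uniqueness of derivatives
   (Q_witness_eq) the choice is immaterial. *)
Definition Qd i s r : nat -> E -> (nat -> E) -> X r -> X s :=
  match pselect (exists D, Q_witness i s r D) with
  | left H => projT1 (cid H)
  | right _ => fun _ _ _ _ => 0
  end.
Arguments Qd : clear implicits.

Lemma Q_Ck_alpha_with i s r (a : R) : 0 < s -> r <= r0 -> 0 < a -> a <= 1 ->
  i%:R + a < r - s -> i%:R + a < gamma -> exists D, Ck_alpha_with (Q s r) i a D.
Proof.
move=> s0 rr a0 a1 h1 h2; case: hQ => _ _ hr.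
have i0 : 0 <= i%:R :> R by [].
have I : I0 R r0 s r by split; [lra|split; lra].
have := hr s r I (i%:R + a) (_ : 0 <= i%:R + a); rewrite lt_min h1 h2 => /(_ _ isT).
rewrite /Ct ifF; last by apply/negbTE; rewrite gt_eqF //; lra.
case=> [|k [b [b0 b1 e]]]; first lra.
by move: (e); rewrite -(nat_frac_decomp_uniq a0 a1 b0 b1 e) => /addrI <-.
Qed.

Lemma Qd_witness i s r : 0 < s -> r <= r0 -> i%:R < r - s -> i%:R < gamma ->
  Q_witness i s r (Qd i s r).
Proof.
move=> s0 rr h1 h2; rewrite /Qd; case: pselect => [H|[]]; first exact: (projT2 (cid H)).
have g1 : 0 < gamma - i%:R by lra.
have g2 : 0 < r - s - i%:R by lra.
have [a [a0 a1 ag ar]] := exists_exponent g1 g2.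
have q1 : i%:R + a < r - s by lra.
have q2 : i%:R + a < gamma by lra.
by have [D hD] := Q_Ck_alpha_with s0 rr a0 a1 q1 q2; exists D, a.
Qed.

Lemma Q_witness_chain i s r D : Q_witness i s r D -> deriv_chain D i.
Proof. by case=> a [_ _ /Ck_alpha_with_chain]. Qed.

Lemma Q_witness_0 i s r D : Q_witness i s r D -> forall u h x, U u -> D 0%N u h x = Q s r u x.
Proof. by case=> a [_ _ []]. Qed.

Lemma Q_witness_eq i i' s r D D' : Q_witness i s r D -> Q_witness i' s r D' ->
  forall m, (m <= i)%N -> (m <= i')%N -> forall u h x, U u -> D m u h x = D' m u h x.
Proof.
move=> W1 W2; apply: deriv_chain_unique (Q_witness_chain W1) (Q_witness_chain W2) _.
by move=> u h x Uu; rewrite (Q_witness_0 W1) // (Q_witness_0 W2).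
Qed.

Definition Qder i : family (dirs i) := fun s r u p x => Qd i s r i u (dirs_seq p) x.
Arguments Qder : clear implicits.

Lemma Qder_jl i s s' r u p x : i%:R < gamma -> 0 < s -> s <= s' -> s' <= r -> r <= r0 ->
  i%:R < r - s' -> U u -> j s s' (Qder i s' r u p x) = Qder i s r u p x.
Proof.
move=> hi s0 ss sr rr lr Uu.
have s'0 : 0 < s' by lra.
have s'r : s' <= r0 by lra.
have W1 := Qd_witness s'0 rr lr hi.
have lr' : i%:R < r - s by lra.
have W2 := Qd_witness s0 rr lr' hi.
have [jb _] := hj s0 ss s'r.
apply: (deriv_chain_unique (deriv_chain_compl (Q_witness_chain W1) jb) (Q_witness_chain W2))
  => // u' h x' Uu'.
have i0 : 0 <= i%:R :> R by [].
by rewrite (Q_witness_0 W1) // (Q_witness_0 W2) // Q_jl //; lra.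
Qed.

Lemma Qder_jr i s r r' u p x : i%:R < gamma -> 0 < s -> s <= r -> r <= r' -> r' <= r0 ->
  i%:R < r - s -> U u -> Qder i s r u p (j r r' x) = Qder i s r' u p x.
Proof.
move=> hi s0 sr rr rr' lr Uu.
have rr0 : r <= r0 by lra.
have r0' : 0 < r by lra.
have W1 := Qd_witness s0 rr0 lr hi.
have lr' : i%:R < r' - s by lra.
have W2 := Qd_witness s0 rr' lr' hi.
have [jb _] := hj r0' rr rr'.
apply: (deriv_chain_unique (deriv_chain_compr (Q_witness_chain W1) jb) (Q_witness_chain W2))
  => // u' h x' Uu'.
by rewrite (Q_witness_0 W1) // (Q_witness_0 W2) // Q_jr.
Qed.

Lemma holder_family_Qder i : i%:R < gamma ->
  holder_family (@dirs_norm i) i%:R (gamma - i%:R) (Qder i).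
Proof.
move=> hi; split=> [//|p|s r s0 rr lr u Uu p|s s' r *|s r r' *|s r s0 rr lr|].
- by rewrite dirs_norm_hprod hprod_ge0.
- have [a [_ _ [_ hm _ _ _]]] := Qd_witness s0 rr lr hi.
  by have [_ hb _ _] := hm i u (leqnn i) Uu; exact: (hb (dirs_seq p)).1.
- exact: Qder_jl.
- exact: Qder_jr.
- have [a [_ _ [_ _ _ hb _]]] := Qd_witness s0 rr lr hi.
  have [C hC] := hb i (leqnn i).
  exists (Num.max C 0) => [|u Uu p x]; first by rewrite le_max lexx orbT.
  rewrite /Qder dirs_norm_hprod; apply: le_trans (hC u Uu _ x) _.
  by rewrite -!mulrA ler_wpM2r ?mulr_ge0 ?hprod_ge0 // le_max lexx.
move=> a a0 a1 ag s r s0 rr lr.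
have i0 : 0 <= i%:R :> R by [].
have q2 : i%:R + a < gamma by lra.
have [D hD] := Q_Ck_alpha_with s0 rr a0 a1 lr q2.
have lr' : i%:R < r - s by lra.
have W := Qd_witness s0 rr lr' hi.
have W' : Q_witness i s r D by exists a.
have [_ _ _ _ [C hC]] := hD.
exists (Num.max C 0) => [|u v Uu Uv p x]; first by rewrite le_max lexx orbT.
rewrite /Qder dirs_norm_hprod !(Q_witness_eq W W' (leqnn i) (leqnn i)) //.
apply: le_trans (hC u v Uu Uv _ x) _.
by rewrite -!mulrA ler_wpM2r ?mulr_ge0 ?hprod_ge0 ?powR_ge0 // le_max lexx.
Qed.

Lemma is_family_deriv_Qder i s r : i.+1%:R < gamma -> 0 < s -> r <= r0 -> i%:R + 1 < r - s ->
  is_family_deriv (@dirs_norm i) (Qder i) (Qder i.+1) s r.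
Proof.
move=> hi s0 rr lr.
have lr1 : i.+1%:R < r - s by rewrite -natr1.
have lr0 : i%:R < r - s by lra.
have hi0 : i%:R < gamma by move: hi; rewrite -natr1; lra.
have W1 := Qd_witness s0 rr lr1 hi.
have E0 := Q_witness_eq (Qd_witness s0 rr lr0 hi0) W1 (leqnn i) (leqnSn i).
have [b [_ _ [_ hm hf _ _]]] := W1.
split=> [u Uu e e0|u Uu p x]; last exact: (multilin_hcons (dirs_seq p) x (ltn0Sn i) (hm i.+1 u (leqnn _) Uu)).
have [d d0 hd] := hf i u (ltnSn i) Uu e e0.
by exists d => // v hv Uv p x; rewrite /Qder /= dirs_norm_hprod !E0 //; apply: hd.
Qed.

Lemma smooth_family_Qder k i : (i + k)%:R < gamma ->
  smooth_family k (@dirs_norm i) i%:R (gamma - i%:R) (Qder i).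
Proof.
elim: k i => [|k IH] i hik; first by split=> //; apply: holder_family_Qder; rewrite addn0 in hik.
have hi : i%:R < gamma by apply: le_lt_trans hik; rewrite ler_nat leq_addr.
have hi1 : i.+1%:R < gamma by apply: le_lt_trans hik; rewrite ler_nat addnS ltnS leq_addr.
split; first exact: holder_family_Qder.
exists (Qder i.+1) => [s r s0 rr lr|]; first exact: is_family_deriv_Qder.
by have := IH i.+1; rewrite addSnnS -natr1 opprD addrA; apply.
Qed.

Lemma Qder0 s r u x : 0 < s -> r <= r0 -> 0 < r - s -> U u -> Qder 0 s r u tt x = Q s r u x.
Proof. by move=> s0 rr lr Uu; rewrite /Qder (Q_witness_0 (Qd_witness (i := 0) s0 rr lr gamma0)). Qed.

(** * The resolvent *)

Section Resolvent.
Variable Rinv : forall s : R, E -> X s -> X s.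
Arguments Rinv : clear implicits.
Hypothesis hRinv : forall s, 0 < s -> s <= r0 -> forall u, U u ->
  [/\ bdd_lin (Rinv s u),
      (forall x : X s, Rinv s u (x - Q s s u x) = x) &
      (forall x : X s, Rinv s u x - Q s s u (Rinv s u x) = x)].
Hypothesis hRb : forall eps : R, 0 < eps -> exists C : R,
  forall s, eps < s -> s <= r0 -> forall u, U u -> forall x : X s, `|Rinv s u x| <= C * `|x|.

Definition Rfam : family unit := fun s r u _ x => j s r (Rinv r u x).
Arguments Rfam : clear implicits.

Lemma Rinv_linear s u : 0 < s -> s <= r0 -> U u -> linear (Rinv s u).
Proof. by move=> s0 sr Uu; case: (hRinv s0 sr Uu) => -[]. Qed.

Lemma Rinv_j r r' u x : 0 < r -> r < r' -> r' <= r0 -> U u ->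
  Rinv r u (j r r' x) = j r r' (Rinv r' u x).
Proof.
move=> r0' rr rr0 Uu; case: hQ => _ he _.
have r'0 : 0 < r' by lra.
have rr0' : r <= r0 by lra.
have [_ _ hr] := hRinv r'0 rr0 Uu; have [_ hl _] := hRinv r0' rr0' Uu.
set y := Rinv r' u x.
have -> : x = y - Q r' r' u y by rewrite hr.
rewrite (zmod_morphism_linear (j_linear r0' (ltW rr) rr0)).
by rewrite (he r r r' r') ?hl //; split; lra.
Qed.

Lemma Rfam_bounded s r : 0 < s -> s <= r -> r <= r0 ->
  exists2 C : R, 0 <= C & forall u, U u -> forall x, `|Rfam s r u tt x| <= C * `|x|.
Proof.
move=> s0 sr rr; have [Cj Cj0 hCj] := j_bound s0 sr rr.
have r20 : 0 < r / 2 by lra.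
have [CR hCR] := hRb r20.
exists (Cj * Num.max CR 0) => [|u Uu x]; first by rewrite mulr_ge0 // le_max lexx orbT.
apply: le_trans (hCj _) _; rewrite -mulrA ler_wpM2l //.
apply: le_trans (hCR r _ rr u Uu x) _; first lra.
by rewrite ler_wpM2r // le_max lexx.
Qed.

Lemma Rinv_sub s u v z : 0 < s -> s <= r0 -> U u -> U v ->
  Rinv s u z - Rinv s v z = Rinv s u (Q s s u (Rinv s v z) - Q s s v (Rinv s v z)).
Proof.
move=> s0 sr Uu Uv; have [_ _ hrv] := hRinv s0 sr Uv; have [_ hlu _] := hRinv s0 sr Uu.
set w := Rinv s v z.
have {1}-> : z = (w - Q s s u w) + (Q s s u w - Q s s v w) by rewrite addrA subrK hrv.
by rewrite (GRing.semilinear_linear (Rinv_linear s0 sr Uu)).2 hlu addrAC subrr add0r.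
Qed.

Lemma Rfam_sub s c c' r u v x : 0 < s -> s < c -> c < c' -> c' < r -> r <= r0 -> U u -> U v ->
  Rfam s r u tt x - Rfam s r v tt x =
  Rfam s c u tt (Q c c' u (Rfam c' r v tt x) - Q c c' v (Rfam c' r v tt x)).
Proof.
move=> s0 sc cc cr rr Uu Uv.
have sr : s < r by lra.
have sr0 : s <= r0 by lra.
rewrite /Rfam -!(Rinv_j _ s0 sr rr) // Rinv_sub // (Rinv_j _ s0 sr rr) //.
set y := Rinv r v x.
rewrite !(Q_jr _ s0 (lexx s) (ltW sr) rr) //.
have c0 : 0 < c by lra.
have cr' : c < r by lra.
have cr0 : c <= r0 by lra.
rewrite -!(Q_jl _ s0 (ltW sc) cr' rr) // -!(Q_jr _ c0 (ltW cc) (ltW cr) rr) //.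
by rewrite -(zmod_morphism_linear (j_linear s0 (ltW sc) cr0)) Rinv_j.
Qed.

Lemma Rfam_holder a s r : 0 < a -> a <= 1 -> a < gamma -> 0 < s -> r <= r0 -> a < r - s ->
  exists2 C : R, 0 <= C & forall u v, U u -> U v -> forall x,
    `|Rfam s r u tt x - Rfam s r v tt x| <= C * (`|u - v| `^ a) * `|x|.
Proof.
move=> a0 a1 ag s0 rr lr.
pose e := r - s - a; pose c := s + e / 3; pose c' := c + a + e / 3.
have [sc cc cr] : [/\ s < c, c < c' & c' < r] by rewrite /c' /c /e; split; lra.
have [c0 c'0 cr0 c'r gap0] : [/\ 0 < c, 0 < c', c <= r0, c' <= r0 & 0 < c' - c].
  by split; lra.
have gap : 0%:R + a < c' - c by rewrite add0r /c' /e; lra.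
have ag0 : a < gamma - 0%:R by rewrite subr0.
have [H H0 hH] := hf_holder (holder_family_Qder (i := 0) gamma0) a0 a1 ag0 c0 c'r gap.
have [C1 C10 hC1] := Rfam_bounded s0 (ltW sc) cr0.
have [C2 C20 hC2] := Rfam_bounded c'0 (ltW cr) rr.
exists (C1 * H * C2) => [|u v Uu Uv x]; first by rewrite !mulr_ge0.
rewrite (Rfam_sub x s0 sc cc cr rr Uu Uv); set y := Rfam c' r v tt x.
apply: le_trans (hC1 u Uu _) _.
rewrite -!(Qder0 _ c0 c'r gap0) //.
have := hH u v Uu Uv tt y; rewrite /= mulr1 => hy.
apply: le_trans (ler_wpM2l C10 hy) _.
have z0 : 0 <= `|u - v| `^ a by apply: powR_ge0.
apply: le_trans (ler_wpM2l _ (ler_wpM2l _ (hC2 v Uv x))) _; rewrite ?mulr_ge0 //.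
by apply: le_of_eq; ring.
Qed.

Lemma holder_family_Rfam : holder_family (fun _ : unit => 1) 0 gamma Rfam.
Proof.
split=> // [s r s0 rr lr u Uu p a x y|s s' r s0 ss sr rr lr u Uu p x|
            s r r' s0 sr rr rr' lr u Uu p x|s r s0 rr lr|a a0 a1 ag s r s0 rr lr].
- have r0' : 0 < r by lra.
  have sr : s <= r by lra.
  by rewrite /Rfam (Rinv_linear r0' rr Uu) (j_linear s0 sr rr).
- by rewrite /Rfam hjcomp.
- have [e|rr''] := eqVneq r r'; first by subst r'; rewrite hjid //; lra.
  have r0' : 0 < r by lra.
  by rewrite /Rfam Rinv_j ?hjcomp // lt_neqAle rr'' rr.
- have sr : s <= r by lra.
  have [C C0 hC] := Rfam_bounded s0 sr rr.
  by exists C => // u Uu [] x; rewrite mulr1; apply: hC.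
- rewrite add0r in lr; have [C C0 hC] := Rfam_holder a0 a1 ag s0 rr lr.
  by exists C => // u v Uu Uv [] x; rewrite mulr1; apply: hC.
Qed.

(* DR_{s,r}(u)[v] = R_{s,ci}(u) DQ_{ci,c}(u)[v] R_{c,r}(u), with intermediate
   scales [ci < c] given by [mid_scale]. *)
Definition Rfam_deriv : family (unit * E) := fun s r u p =>
  fam_comp 1 0 (fam_comp 0 1 Rfam (Qder 1)) Rfam s r u ((tt, (tt, p.2)), tt).
Arguments Rfam_deriv : clear implicits.

Lemma Rfam_scales s r : 1 < r - s ->
  let c := mid_scale 1 0 s r in let ci := mid_scale 0 1 s c in
  [/\ s < ci, ci < c, c < r & 1 < c - ci].
Proof. by rewrite /mid_scale => lr /=; split; lra. Qed.

Lemma Rfam_remainder s r u v x : 0 < s -> r <= r0 -> 1 < r - s -> U u -> U (u + v) ->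
  let c := mid_scale 1 0 s r in let ci := mid_scale 0 1 s c in
  let y := Rfam c r u tt x in let Dv := Qder 1 ci c u (tt, v) y in
  Rfam s r (u + v) tt x - Rfam s r u tt x - Rfam_deriv s r u (tt, v) x =
  Rfam s ci (u + v) tt (Qder 0 ci c (u + v) tt y - Qder 0 ci c u tt y - Dv)
  + (Rfam s ci (u + v) tt Dv - Rfam s ci u tt Dv).
Proof.
move=> s0 rr lr Uu Uv c ci y Dv; have [sci cic cr _] := Rfam_scales lr.
rewrite -/c -/ci in sci cic cr.
have [ci0 cr0 gap cir0 k0] : [/\ 0 < ci, c <= r0, 0 < c - ci, ci <= r0 & 0 < ci - s].
  by split; lra.
rewrite (Rfam_sub x s0 sci cic cr rr Uv Uu) -/y -!(Qder0 _ ci0 cr0 gap) //.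
rewrite !(zmod_morphism_linear (hf_linear holder_family_Rfam s0 cir0 k0 Uv tt)).
by rewrite addrA subrK.
Qed.

Lemma Rfam_deriv_linear s r u x : 1 < gamma -> 0 < s -> r <= r0 -> 1 < r - s -> U u ->
  linear (fun v => Rfam_deriv s r u (tt, v) x).
Proof.
move=> g1 s0 rr lr Uu a v1 v2; have [sci cic cr gap1] := Rfam_scales lr.
set c := mid_scale 1 0 s r in sci cic cr gap1 *; set ci := mid_scale 0 1 s c in sci cic gap1 *.
have [ci0 cr0 cir0 k0] : [/\ 0 < ci, c <= r0, ci <= r0 & 0 < ci - s] by split; lra.
have gap : 0%:R + 1 < c - ci by rewrite add0r.
rewrite /Rfam_deriv /fam_comp /= -/c -/ci (is_family_deriv_Qder (i := 0) g1 ci0 cr0 gap).2 //.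
by rewrite (hf_linear holder_family_Rfam s0 cir0 k0 Uu).
Qed.

Lemma is_family_deriv_Rfam s r : 1 < gamma -> 0 < s -> r <= r0 -> 1 < r - s ->
  is_family_deriv (fun _ : unit => 1) Rfam Rfam_deriv s r.
Proof.
move=> g1 s0 rr lr; split=> [u Uu e e0|u Uu [] x]; last exact: Rfam_deriv_linear.
have [sci cic cr gap1] := Rfam_scales lr.
set c := mid_scale 1 0 s r in sci cic cr gap1 *; set ci := mid_scale 0 1 s c in sci cic gap1 *.
have [ci0 c0 cr0 cir0 k0] : [/\ 0 < ci, 0 < c, c <= r0, ci <= r0 & 0 < ci - s].
  by split; lra.
have gap : 0%:R + 1 < c - ci by rewrite add0r.
have FT := (is_family_deriv_Qder (i := 0) g1 ci0 cr0 gap).1.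
have [CD CD0 hCD] := hf_bounded (holder_family_Qder (i := 1) g1) ci0 cr0 gap1.
have [C1 C10 hC1] := Rfam_bounded s0 (ltW sci) cir0.
have [C2 C20 hC2] := Rfam_bounded c0 (ltW cr) rr.
have e20 : 0 < e / 2 by rewrite divr_gt0.
have [e1 e10 he1] := small_factor (mulr_ge0 C10 C20) e20.
have [eta eta0 heta] := small_factor (mulr_ge0 CD0 C20) e20.
have [d1 d10 hd1] := FT u Uu e1 e10.
have [d2 d20 hd2] := holder_family_cont holder_family_Rfam (lt_trans ltr01 g1) s0 cir0 k0 Uu eta0.
exists (Num.min d1 d2) => [|v]; first by rewrite lt_min d10 d20.
rewrite lt_min => /andP[v1 v2] Uv [] x; rewrite Rfam_remainder // -/c -/ci.
set y := Rfam c r u tt x; set Dv := Qder 1 ci c u (tt, v) y.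
have hy : `|y| <= C2 * `|x| by apply: hC2.
have T1 : `|Rfam s ci (u + v) tt (Qder 0 ci c (u + v) tt y - Qder 0 ci c u tt y - Dv)|
    <= C1 * (e1 * `|v| * (C2 * `|x|)).
  apply: le_trans (hC1 _ Uv _) _; rewrite ler_wpM2l //.
  apply: le_trans (hd1 v v1 Uv tt y) _; rewrite /= mulr1 ler_wpM2l //.
  by rewrite mulr_ge0 // ltW.
have T2 : `|Rfam s ci (u + v) tt Dv - Rfam s ci u tt Dv| <= eta * (CD * `|v| * (C2 * `|x|)).
  rewrite distrC; apply: le_trans (hd2 (u + v) Uv _ tt Dv) _.
    by rewrite opprD addrA subrr sub0r normrN.
  rewrite mulr1; apply: ler_wpM2l; first exact: ltW.
  apply: le_trans (hCD u Uu (tt, v) y) _.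
  by rewrite /= mul1r ler_wpM2l // mulr_ge0.
apply: le_trans (ler_normD _ _) _; apply: le_trans (lerD T1 T2) _.
have W0 : 0 <= `|v| * `|x| by rewrite mulr_ge0.
by have := ler_wpM2r W0 (lerD he1 heta); lra.
Qed.

Lemma smooth_family_Rfam k : k%:R < gamma -> smooth_family k (fun _ : unit => 1) 0 gamma Rfam.
Proof.
elim: k => [|k IH] hk; first by split=> //; exact: holder_family_Rfam.
move: (hk); rewrite -natr1 => hk1; have k0 : 0 <= k%:R :> R by [].
have g1 : 1 < gamma by lra.
split; first exact: holder_family_Rfam.
exists Rfam_deriv => [s r s0 rr|]; first by rewrite add0r; apply: is_family_deriv_Rfam.
have kg : k%:R < gamma - 1 by lra.
have gg : gamma - 1 <= gamma by lra.
have hk' : k%:R < gamma by lra.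
have GR := smooth_family_le (leqnn k) gg (IH hk').
have GQ : smooth_family k (@dirs_norm 1) 1 (gamma - 1) (Qder 1).
  by apply: smooth_family_Qder; rewrite add1n.
have := smooth_family_reindex (f := fun p : unit * E => ((tt, (tt, p.2)), tt))
  (w' := deriv_weight (fun _ : unit => 1)) _ (smooth_family_comp kg (smooth_family_comp kg GR GQ) GR).
rewrite addr0 !add0r; apply=> -[[] v].
by rewrite /deriv_weight /= !mul1r mulr1.
Qed.

Lemma Rfam_C0 s r : 0 < s -> r <= r0 -> s < r -> C0_op U (fun u x => Rfam s r u tt x).
Proof.
move=> s0 rr sr u Uu eps eps0; have gap : 0 < r - s by lra.
have [d d0 hd] := holder_family_cont holder_family_Rfam gamma0 s0 rr gap Uu eps0.
exists d => // v Uv hv x; rewrite distrC -(mulr1 eps).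
by apply: hd; rewrite // distrC.
Qed.

Lemma Rfam_Ck_alpha s r (k : nat) a : 0 < s -> r <= r0 -> 0 < a -> a <= 1 ->
  k%:R + a < r - s -> k%:R + a < gamma -> Ck_alpha U (fun u x => Rfam s r u tt x) k a.
Proof.
move=> s0 rr a0 a1 kr kg.
have enc : slot_encoding s r (fun _ : unit => 1) Rfam 0 (fun _ => tt).
  by split=> // h; rewrite /hprod big_ord0.
have k0 : 0 <= k%:R :> R by [].
have kg' : k%:R < gamma by lra.
have kr' : 0 + k%:R + a < r - s by rewrite add0r.
have [D [[m f b h] D0]] := smooth_family_Ck_alpha (smooth_family_Rfam kg') s0 rr kr' a0 a1 kg enc.
by exists D; split=> // u hh x Uu; rewrite D0.
Qed.

Lemma Rfam_regular : regular R r0 gamma U (fun s r u x => Rfam s r u tt x).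
Proof.
move=> s r [s0 [sr rr]] t t0; rewrite lt_min => /andP[tg trs].
rewrite /Ct; case: eqP => [_|/eqP tn0]; first by apply: Rfam_C0 => //; lra.
have [k [a [a0 a1 tk]]] : exists k a, [/\ 0 < a, a <= 1 & t = k%:R + a].
  by apply: nat_frac_decomp; rewrite lt_neqAle eq_sym tn0.
by exists k, a; split=> //; apply: Rfam_Ck_alpha => //; rewrite -tk.
Qed.

Lemma Rfam_bdd_lin s r u : I0 R r0 s r -> U u -> bdd_lin (fun x => Rfam s r u tt x).
Proof.
move=> [s0 [sr rr]] Uu; have r0' : 0 < r by lra.
split; first by move=> a x y; rewrite /Rfam (Rinv_linear r0' rr Uu) (j_linear s0 sr rr).
by have [C _ hC] := Rfam_bounded s0 sr rr; exists C => x; apply: hC.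
Qed.

Lemma Rfam_equivariant : equivariant R j r0 U (fun s r u x => Rfam s r u tt x).
Proof.
move=> s r s' r' [s0 [sr rr]] [s'0 [s'r' r'r0]] ss' rr' u Uu x.
by rewrite /Rfam Rinv_j ?hjcomp //; lra.
Qed.

Theorem Rfam_equiv_regular :
  equiv_regular R j r0 gamma U (fun s r u x => j s r (Rinv r u x)).
Proof.
split; [move=> s r I u Uu; exact: Rfam_bdd_lin I Uu | exact: Rfam_equivariant |].
exact: Rfam_regular.
Qed.

End Resolvent.

End RegularFamily.

End Scale.

Theorem lemmaD6 (R : realType) (r0 gamma : R)
  (X : R -> completeNormedModType R)
  (j : forall s r : R, X r -> X s)
  (B : completeNormedModType R) (U : set B)
  (Q : forall s r : R, B -> X r -> X s)
  (Rinv : forall s : R, B -> X s -> X s) :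
  0 < r0 -> 0 < gamma -> gamma <= r0 ->
  (* the scale of Banach spaces and the injections j_{s,r} *)
  (forall s r, 0 < s -> s <= r -> r <= r0 ->
     [/\ bdd_lin (j s r), injective (j s r) & dense (range (j s r))]) ->
  (forall s, 0 < s -> s <= r0 -> forall x : X s, j s s x = x) ->
  (forall s c r, 0 < s -> s <= c -> c <= r -> r <= r0 ->
     forall x : X r, j s c (j c r x) = j s r x) ->
  (* U non-empty open convex *)
  U !=set0 -> open U -> convex_set U ->
  (* Q equivariant and (gamma,0)-regular *)
  equiv_regular R j r0 gamma U Q ->
  (* Rinv s u = (1 - Q_s(u))^{-1} in L(X_s) *)
  (forall s, 0 < s -> s <= r0 -> forall u, U u ->
     [/\ bdd_lin (Rinv s u),
         (forall x : X s, Rinv s u (x - Q s s u x) = x) &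
         (forall x : X s, Rinv s u x - Q s s u (Rinv s u x) = x)]) ->
  (* uniform bound on eps < s <= r0, u in U *)
  (forall eps : R, 0 < eps -> exists C : R,
     forall s, eps < s -> s <= r0 -> forall u, U u ->
       forall x : X s, `|Rinv s u x| <= C * `|x|) ->
  equiv_regular R j r0 gamma U (fun s r u x => j s r (Rinv r u x)).
Proof.
move=> _ gamma0 _ hj hjid hjcomp _ hU _ hQ hRinv hRb.
have hj' s r : 0 < s -> s <= r -> r <= r0 -> bdd_lin (j s r) /\ injective (j s r).
  by move=> s0 sr rr; case: (hj s r s0 sr rr).
exact: (Rfam_equiv_regular (X := fun r => X r : normedModType R)
  hj' hjid hjcomp hU hQ gamma0 hRinv hRb).
Qed.
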